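(* Let $p$ be a full-support skill distribution and $q$ a full-support perception with $p\succsim_{LR}q$ (the population is under-perceived). Let $\langle S',\pi'\rangle\succsim_G\langle S,\pi\rangle$ be signal structures with $\langle S',\pi'\rangle$ MLR. Then for every monotone firm $A\subset\mathcal{A}_M$, $$W_A(p,q,\langle S',\pi'\rangle)\ \ge\ W_A(p,q,\langle S,\pi\rangle).$$
   Context: Let $\Theta\subset\mathbb{R}$ be a finite set of skill types with $|\Theta|\ge2$. Tasks are vectors $a\in\mathcal{A}:=\mathbb{R}^\Theta$. A firm is a non-empty finite set $A\subset\mathcal{A}$. It is monotone if $A\subset\mathcal{A}_M:=\{a: a(\theta')>a(\theta)\text{ whenever }\theta'>\theta\}$. A signal structure $\langle S,\pi\rangle$ consists of a non-empty finite set $S$ and a map $\pi:S\times\Theta\to[0,1]$ with $\sum_s\pi(s|\theta)=1$, such that each $s$ has $\pi(s|\theta)>0$ for some $\theta$. Pay: - $p,q\in\Delta(\Theta)$ have full support. - $q_{\langle S,\pi\rangle}(\theta|s):=q(\theta)\pi(s|\theta)/\sum_{\theta'}q(\theta')\pi(s|\theta')$. - $w_A(s,q,\langle S,\pi\rangle):=\max_{a\in A}\sum_\theta q_{\langle S,\pi\rangle}(\theta|s)a(\theta)$. - $W_A(p,q,\langle S,\pi\rangle):=\sum_\theta p(\theta)\sum_s\pi(s|\theta)w_A(s,q,\langle S,\pi\rangle)$. Orders: - $q'\succsim_{LR}q$ means $q(\theta)q'(\theta')\ge q(\theta')q'(\theta)$ whenever $\theta'>\theta$. - $\langle S',\pi'\rangle\succsim_G\langle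 S,\pi\rangle$ means there exists $g:S\times S'\to[0,1]$ with $\sum_s g(s|s')=1$ for each $s'$ and $\pi(s|\theta)=\sum_{s'}g(s|s')\pi'(s'|\theta)$ for all $s,\theta$. - $\langle S,\pi\rangle$ is MLR if $S\subset\mathbb{R}$ and $\pi(s|\theta)\pi(s'|\theta')\ge\pi(s|\theta')\pi(s'|\theta)$ whenever $s'>s$, $\theta'>\theta$. *)

From HB Require Import structures.
From mathcomp Require Import all_boot all_order all_algebra.
From mathcomp Require Import reals.
Set Implicit Arguments. Unset Strict Implicit. Unset Printing Implicit Defensive.
Import Order.TTheory GRing.Theory Num.Theory.
Local Open Scope ring_scope.

(* Skill types: a finite set Θ ⊂ ℝ is represented by a finType T together
   with an injective embedding th : T -> R (the real value of each type).
   The order on Θ is the order of the embedded values. *)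
Definition skill_types (R : realType) (T : finType) (th : T -> R) : Prop :=
  injective th /\ (2 <= #|T|)%N.

(* tasks a ∈ ℝ^Θ are {ffun T -> R}; a firm is a non-empty finite set of tasks,
   represented by a non-empty list (duplicates are irrelevant). *)
Definition firm (R : realType) (T : finType) (A : seq {ffun T -> R}) : Prop :=
  A <> [::].

Definition monotone_task (R : realType) (T : finType) (th : T -> R)
  (a : {ffun T -> R}) : Prop :=
  forall t t' : T, th t < th t' -> a t < a t'.

Definition monotone_firm (R : realType) (T : finType) (th : T -> R)
  (A : seq {ffun T -> R}) : Prop :=
  forall a, a \in A -> monotone_task th a.

Definition full_support_dist (R : realType) (T : finType) (p : T -> R) : Prop :=
  (forall t, 0 < p t) /\ \sum_(t : T) p t = 1.

(* signal structure <S, pi>, pi s t = π(s|θ) *)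
Definition signal_structure (R : realType) (T S : finType) (pi : S -> T -> R) : Prop :=
  (0 < #|S|)%N /\
  (forall s t, 0 <= pi s t <= 1) /\
  (forall t, \sum_(s : S) pi s t = 1) /\
  (forall s, exists t, 0 < pi s t).

Definition posterior (R : realType) (T S : finType) (q : T -> R) (pi : S -> T -> R)
  (s : S) (t : T) : R :=
  q t * pi s t / \sum_(t' : T) q t' * pi s t'.

Definition task_value (R : realType) (T S : finType) (q : T -> R) (pi : S -> T -> R)
  (s : S) (a : {ffun T -> R}) : R :=
  \sum_(t : T) posterior q pi s t * a t.

(* w_A(s,q,<S,pi>) = max_{a ∈ A} ... (A non-empty; value 0 for empty A is never used) *)
Definition wage (R : realType) (T S : finType) (A : seq {ffun T -> R})
  (q : T -> R) (pi : S -> T -> R) (s : S) : R :=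
  match A with
  | [::] => 0
  | a0 :: _ => \big[Num.max/task_value q pi s a0]_(a <- A) task_value q pi s a
  end.

Definition total_wage (R : realType) (T S : finType) (A : seq {ffun T -> R})
  (p q : T -> R) (pi : S -> T -> R) : R :=
  \sum_(t : T) p t * \sum_(s : S) pi s t * wage A q pi s.

Definition LR_ge (R : realType) (T : finType) (th : T -> R) (q' q : T -> R) : Prop :=
  forall t t' : T, th t' > th t -> q t * q' t' >= q t' * q' t.

Definition garbling_ge (R : realType) (T S' S : finType)
  (pi' : S' -> T -> R) (pi : S -> T -> R) : Prop :=
  exists g : S -> S' -> R,
    (forall s s', 0 <= g s s' <= 1) /\
    (forall s', \sum_(s : S) g s s' = 1) /\
    (forall s t, pi s t = \sum_(s' : S') g s s' * pi' s' t).

(* MLR signal structure: S ⊂ ℝ is represented by an injective embedding sg *)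
Definition MLR (R : realType) (T S : finType) (th : T -> R) (sg : S -> R)
  (pi : S -> T -> R) : Prop :=
  injective sg /\
  forall s s' t t', sg s' > sg s -> th t' > th t ->
    pi s t * pi s' t' >= pi s t' * pi s' t.

(* Write W_A = sum_s m_p(s) w(s), with m_r(s) = sum_t r(t) pi(s|t) the marginal of s.
   Under an MLR structure the posterior rises with the signal, so the wage w'(u) is
   nondecreasing in u; since p >=_LR q, so is the likelihood ratio
   lambda(u) = m_p'(u) / m_q'(u).  For a garbled signal s with weights
   alpha(u) = g(s|u) m_q'(u), the expected maximum is at most the mixture of maxima,
   m_q(s) w(s) <= sum_u alpha(u) w'(u), while m_p(s) / m_q(s) is the alpha-average of
   lambda.  Chebyshev's sum inequality for the comonotone lambda and w' then gives
   m_p(s) w(s) <= sum_u alpha(u) lambda(u) w'(u), and summing over s yields W_A'. *)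
From HB Require Import structures.
From mathcomp Require Import all_boot all_order all_algebra.
From mathcomp Require Import reals ring lra.
Set Implicit Arguments. Unset Strict Implicit. Unset Printing Implicit Defensive.
Import Order.TTheory GRing.Theory Num.Theory.
Local Open Scope ring_scope.

Section SumInequalities.
Variable R : realType.

Lemma sum_symmetrized_ge0 (I : finType) (H : I -> I -> R) :
  (forall i j, 0 <= H i j + H j i) -> 0 <= \sum_i \sum_j H i j.
Proof.
move=> hH.
have swap : \sum_i \sum_j H i j = \sum_i \sum_j H j i := exchange_big _ _ _ _ _ _.
have : 0 <= \sum_i \sum_j (H i j + H j i).
  by apply: sumr_ge0 => i _; apply: sumr_ge0 => j _; apply: hH.
rewrite (eq_bigr _ (fun i _ => big_split _ _ _ _ _)) big_split /= -swap; lra.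
Qed.

Lemma chebyshev_sum (I : finType) (a f h : I -> R) :
  (forall i, 0 <= a i) -> (forall i j, 0 <= (f i - f j) * (h i - h j)) ->
  (\sum_i a i * f i) * (\sum_i a i * h i) <= (\sum_i a i) * (\sum_i a i * f i * h i).
Proof.
move=> a_ge0 fh_comon; rewrite -subr_ge0 !big_distrlr -sumrB.
under eq_bigr do rewrite -sumrB.
apply: sum_symmetrized_ge0 => i j.
have -> : a i * (a j * f j * h j) - a i * f i * (a j * h j) +
    (a j * (a i * f i * h i) - a j * f j * (a i * h i)) =
    (a i * a j) * ((f i - f j) * (h i - h j)) by ring.
by rewrite mulr_ge0 // mulr_ge0.
Qed.

(* In ratio form the hypotheses say that r1/r2 and y/x are nondecreasing along th. *)
Lemma tp2_cross_sum_le (T : finType) (th : T -> R) (r1 r2 x y : T -> R) :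
  injective th ->
  (forall t t', th t < th t' -> r1 t * r2 t' <= r1 t' * r2 t) ->
  (forall t t', th t < th t' -> x t' * y t <= x t * y t') ->
  (\sum_t r1 t * x t) * (\sum_t r2 t * y t) <=
  (\sum_t r1 t * y t) * (\sum_t r2 t * x t).
Proof.
move=> th_inj r_mono xy_mono; rewrite -subr_ge0 !big_distrlr -sumrB.
under eq_bigr do rewrite -sumrB.
apply: sum_symmetrized_ge0 => t t'.
have -> : r1 t * y t * (r2 t' * x t') - r1 t * x t * (r2 t' * y t') +
    (r1 t' * y t' * (r2 t * x t) - r1 t' * x t' * (r2 t * y t)) =
    (r1 t * r2 t' - r1 t' * r2 t) * (y t * x t' - x t * y t') by ring.
case: (ltgtP (th t) (th t')) => htt'.
- apply: mulr_le0; rewrite subr_le0; first exact: r_mono.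
  by have := xy_mono _ _ htt'; lra.
- apply: mulr_ge0; rewrite subr_ge0; first exact: r_mono.
  by have := xy_mono _ _ htt'; lra.
- by rewrite (th_inj _ _ htt') !subrr mul0r.
Qed.

Lemma comonotone_of_nondecreasing (I : Type) (sg f h : I -> R) :
  injective sg ->
  (forall u v, sg u < sg v -> f u <= f v) ->
  (forall u v, sg u < sg v -> h u <= h v) ->
  forall u v, 0 <= (f u - f v) * (h u - h v).
Proof.
move=> sg_inj f_mono h_mono u v; case: (ltgtP (sg u) (sg v)) => huv.
- by apply: mulr_le0; rewrite subr_le0; [apply: f_mono | apply: h_mono].
- by apply: mulr_ge0; rewrite subr_ge0; [apply: f_mono | apply: h_mono].
- by rewrite (sg_inj _ _ huv) !subrr mul0r.
Qed.

End SumInequalities.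

Section Marginals.
Variables (R : realType) (T : finType).

Definition marginal (S : finType) (r : T -> R) (pi : S -> T -> R) (s : S) : R :=
  \sum_t r t * pi s t.

Definition likelihood_ratio (S : finType) (p q : T -> R) (pi : S -> T -> R) (s : S) : R :=
  marginal p pi s / marginal q pi s.

Lemma marginal_gt0 (S : finType) (r : T -> R) (pi : S -> T -> R) s :
  (forall t, 0 < r t) -> (forall t, 0 <= pi s t) -> (exists t, 0 < pi s t) ->
  0 < marginal r pi s.
Proof.
move=> r_gt0 pi_ge0 [t0 pi_t0]; rewrite /marginal (bigD1 t0) //=.
apply: ltr_wpDr; last by rewrite mulr_gt0.
by apply: sumr_ge0 => t _; rewrite mulr_ge0 // ltW.
Qed.

Lemma task_valueE (S : finType) (q : T -> R) (pi : S -> T -> R) s (a : {ffun T -> R}) :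
  task_value q pi s a = marginal (fun t => q t * a t) pi s / marginal q pi s.
Proof.
by rewrite /task_value /posterior /marginal mulr_suml; apply: eq_bigr => t _; ring.
Qed.

Lemma total_wageE (S : finType) (A : seq {ffun T -> R}) (p q : T -> R)
    (pi : S -> T -> R) :
  total_wage A p q pi = \sum_s marginal p pi s * wage A q pi s.
Proof.
rewrite /total_wage; under eq_bigr do rewrite mulr_sumr.
rewrite exchange_big; apply: eq_bigr => s _; rewrite /marginal mulr_suml.
by apply: eq_bigr => t _; ring.
Qed.

Lemma marginal_task_value (S : finType) (q : T -> R) (pi : S -> T -> R) s
    (a : {ffun T -> R}) :
  marginal q pi s != 0 ->
  marginal (fun t => q t * a t) pi s = marginal q pi s * task_value q pi s a.
Proof. by move=> mass_neq0; rewrite task_valueE mulrC divfK. Qed.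

Lemma le_wage (S : finType) (A : seq {ffun T -> R}) q (pi : S -> T -> R) s a :
  a \in A -> task_value q pi s a <= wage A q pi s.
Proof. by case: A => [|a0 A] // aA; rewrite /wage; apply: le_bigmax_seq. Qed.

Lemma wage_le (S : finType) (A : seq {ffun T -> R}) q (pi : S -> T -> R) s x :
  A <> [::] -> (forall a, a \in A -> task_value q pi s a <= x) -> wage A q pi s <= x.
Proof.
case: A => [|a0 A] // _ tv_le; rewrite /wage big_seq.
by apply: bigmax_le => [|a]; apply: tv_le; rewrite ?mem_head.
Qed.

End Marginals.

Section MonotoneLikelihoodRatio.
Variables (R : realType) (T S : finType) (th : T -> R) (sg : S -> R).
Variables (q : T -> R) (pi : S -> T -> R).
Hypotheses (th_inj : injective th) (pi_mlr : MLR th sg pi).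
Hypotheses (q_gt0 : forall t, 0 < q t) (mass_gt0 : forall s, 0 < marginal q pi s).

Lemma marginal_ratio_nondecreasing (r : T -> R) u v :
  (forall t t', th t < th t' -> r t * q t' <= r t' * q t) -> sg u < sg v ->
  marginal r pi u / marginal q pi u <= marginal r pi v / marginal q pi v.
Proof.
move=> rq_mono huv; rewrite ler_pdivrMr // mulrAC ler_pdivlMr //.
by apply: (tp2_cross_sum_le th_inj) => // t t'; apply: pi_mlr.2.
Qed.

Lemma task_value_nondecreasing a u v :
  monotone_task th a -> sg u < sg v -> task_value q pi u a <= task_value q pi v a.
Proof.
move=> a_mono huv; rewrite !task_valueE.
apply: marginal_ratio_nondecreasing => // t t' htt'.
have : q t * q t' * a t <= q t * q t' * a t'.
  by rewrite ler_pM2l ?mulr_gt0 // ltW // a_mono.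
lra.
Qed.

Lemma wage_nondecreasing (A : seq {ffun T -> R}) u v :
  A <> [::] -> monotone_firm th A -> sg u < sg v -> wage A q pi u <= wage A q pi v.
Proof.
move=> A0 A_mono huv; apply: wage_le => // a aA.
exact: le_trans (task_value_nondecreasing (A_mono a aA) huv) (le_wage _ _ _ aA).
Qed.

Lemma likelihood_ratio_nondecreasing (p : T -> R) u v :
  LR_ge th p q -> sg u < sg v -> likelihood_ratio p q pi u <= likelihood_ratio p q pi v.
Proof.
move=> pq huv; apply: marginal_ratio_nondecreasing => // t t' htt'.
by rewrite mulrC [p t' * _]mulrC; apply: pq.
Qed.

End MonotoneLikelihoodRatio.

Section Garbling.
Variables (R : realType) (T S S' : finType).
Variables (pi : S -> T -> R) (pi' : S' -> T -> R) (g : S -> S' -> R).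
Hypotheses (g_ge0 : forall s u, 0 <= g s u) (g_sum1 : forall u, \sum_s g s u = 1).
Hypothesis pi_garbling : forall s t, pi s t = \sum_u g s u * pi' u t.
Variables (A : seq {ffun T -> R}) (p q : T -> R).
Hypotheses (A0 : A <> [::]) (mass'_gt0 : forall u, 0 < marginal q pi' u).

Lemma marginal_garbling (r : T -> R) s :
  marginal r pi s = \sum_u g s u * marginal r pi' u.
Proof.
rewrite /marginal; under eq_bigr do rewrite pi_garbling mulr_sumr.
rewrite exchange_big; apply: eq_bigr => u _; rewrite mulr_sumr.
by apply: eq_bigr => t _; ring.
Qed.

Lemma total_wage_garbling :
  total_wage A p q pi' =
  \sum_s \sum_u g s u * marginal q pi' u * likelihood_ratio p q pi' u * wage A q pi' u.
Proof.
rewrite total_wageE exchange_big; apply: eq_bigr => u _.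
rewrite -!mulr_suml g_sum1 mul1r /likelihood_ratio.
by field; apply: lt0r_neq0.
Qed.

Hypothesis mass_gt0 : forall s, 0 < marginal q pi s.

(* Blackwell's step: each task value is linear in the signal distribution, so the
   maximum after garbling is at most the mixture of the maxima. *)
Lemma marginal_wage_garbling_le s :
  marginal q pi s * wage A q pi s <= \sum_u g s u * marginal q pi' u * wage A q pi' u.
Proof.
rewrite mulrC -ler_pdivlMr //; apply: wage_le => // a aA.
rewrite ler_pdivlMr // mulrC -marginal_task_value ?lt0r_neq0 //.
rewrite marginal_garbling; apply: ler_sum => u _; rewrite -mulrA.
apply: ler_wpM2l => //; rewrite marginal_task_value ?lt0r_neq0 // ler_pM2l //.
exact: le_wage.
Qed.

Lemma population_wage_garbling_le s :
  0 <= marginal p pi s ->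
  (forall u v, 0 <= (likelihood_ratio p q pi' u - likelihood_ratio p q pi' v) *
                    (wage A q pi' u - wage A q pi' v)) ->
  marginal p pi s * wage A q pi s <=
  \sum_u g s u * marginal q pi' u * likelihood_ratio p q pi' u * wage A q pi' u.
Proof.
move=> mass_p_ge0 comon.
have mass_neq0 := lt0r_neq0 (mass_gt0 s).
have mass_p_eq :
    marginal p pi s = \sum_u g s u * marginal q pi' u * likelihood_ratio p q pi' u.
  rewrite marginal_garbling; apply: eq_bigr => u _; rewrite /likelihood_ratio.
  by field; apply: lt0r_neq0.
have -> : marginal p pi s * wage A q pi s =
    marginal p pi s / marginal q pi s * (marginal q pi s * wage A q pi s) by field.
apply: le_trans (ler_wpM2l _ (marginal_wage_garbling_le s)) _.
  by rewrite divr_ge0 // ltW.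
rewrite mass_p_eq mulrAC ler_pdivrMr // [X in _ <= X]mulrC marginal_garbling.
by apply: chebyshev_sum => u; rewrite ?mulr_ge0 // ltW.
Qed.

End Garbling.

Theorem corollary1 (R : realType) (T : finType) (th : T -> R)
  (p q : T -> R) (S S' : finType) (pi : S -> T -> R) (pi' : S' -> T -> R)
  (sg' : S' -> R) :
  skill_types th ->
  full_support_dist p -> full_support_dist q ->
  LR_ge th p q ->
  signal_structure pi -> signal_structure pi' ->
  garbling_ge pi' pi ->
  MLR th sg' pi' ->
  forall A : seq {ffun T -> R}, firm A -> monotone_firm th A ->
    total_wage A p q pi' >= total_wage A p q pi.
Proof.
move=> [th_inj _] [p_gt0 _] [q_gt0 _] pq [_ [pi01 [_ pi_supp]]]
  [_ [pi'01 [_ pi'_supp]]] [g [g01 [g_sum1 pi_garbling]]] pi'_mlr A A0 A_mono.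
have g_ge0 s u : 0 <= g s u by case/andP: (g01 s u).
have mass_gt0 r s : (forall t, 0 < r t) -> 0 < marginal r pi s.
  by move=> r_gt0; apply: marginal_gt0 (pi_supp s) => // t; case/andP: (pi01 s t).
have mass_q'_gt0 u : 0 < marginal q pi' u.
  by apply: marginal_gt0 (pi'_supp u) => // t; case/andP: (pi'01 u t).
rewrite total_wageE (total_wage_garbling g_sum1 A p mass_q'_gt0).
apply: ler_sum => s _; apply: population_wage_garbling_le => //.
- by move=> s'; apply: mass_gt0.
- exact/ltW/mass_gt0.
apply: (comonotone_of_nondecreasing pi'_mlr.1) => u v huv.
- exact: (likelihood_ratio_nondecreasing th_inj pi'_mlr mass_q'_gt0 pq huv).
- exact: (wage_nondecreasing th_inj pi'_mlr q_gt0 mass_q'_gt0 A0 A_mono huv).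
Qed.
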